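(* The inequality $n^{1/2}\le S_s(n)$ holds for almost all positive integers $n$, i.e., the set of $n$ for which it holds has asymptotic density $1$.
   Context: $s(n)=\sigma(n)-n$ is the sum of proper divisors of $n$, and $S_s(n)=\sum_{d\mid n}s(d)$. *)

From Stdlib Require Import Reals Lra Lia Arith List.
Open Scope R_scope.

Definition divisors_list (n : nat) : list nat :=
  filter (fun d => Nat.eqb (n mod d) 0%nat) (List.seq 1 n).

Definition sigma (n : nat) : nat := fold_right Nat.add 0%nat (divisors_list n).

Definition s_fun (n : nat) : nat := (sigma n - n)%nat.

Definition S_s (n : nat) : nat :=
  fold_right Nat.add 0%nat (map s_fun (divisors_list n)).

Definition count_upto (P : nat -> bool) (N : nat) : nat :=
  length (filter P (List.seq 1 N)).

Definition has_density_one (P : nat -> bool) : Prop :=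
  Un_cv (fun N => INR (count_upto P N) / INR N) 1.

Definition sqrt_le_Ss (n : nat) : bool :=
  if Rle_dec (sqrt (INR n)) (INR (S_s n)) then true else false.

(** A nonprime [n > 1] factors as [n = b p] with [p <= b], so its proper
    divisor [b] gives [sqrt n <= b <= s(n) <= S_s(n)]: the inequality can
    fail only at [n = 1] and at primes.  The primes have density zero by
    Chebyshev's bound: the primes in [(N, 2N]] divide the central binomial
    coefficient, so there are at most [2N / log2 N] of them, and summing over
    dyadic blocks gives [pi(N) <= 16 N / (k + 1)] whenever [N >= 2^k]. *)

From Pilot Require Import Defs.
From Stdlib Require Import Reals Lra Lia.
From mathcomp Require Import all_boot zify.

Set Implicit Arguments.
Unset Strict Implicit.

Open Scope nat_scope.

Lemma eqb_mod0_dvdn d n : Nat.eqb (n mod d) 0 = (d %| n).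
Proof.
apply/Nat.eqb_spec/dvdnP => [/Nat.Lcm0.mod_divide [k ->] | [k ->]]; first by exists k.
by apply/Nat.Lcm0.mod_divide; exists k.
Qed.

Lemma divisors_listE n : 0 < n -> divisors_list n = divisors n.
Proof.
move=> n_gt0; have -> : divisors_list n = [seq d <- iota 1 n | d %| n].
  by apply: eq_filter => d; rewrite eqb_mod0_dvdn.
apply: (irr_sorted_eq ltn_trans ltnn).
- by rewrite sorted_filter ?iota_ltn_sorted //; exact: ltn_trans.
- exact: sorted_divisors_ltn.
move=> d; rewrite mem_filter mem_iota -dvdn_divisors //.
apply/idP/idP => [/andP[] // | dvd_dn].
by rewrite dvd_dn (dvdn_gt0 n_gt0) //= ltnS dvdn_leq.
Qed.

Lemma sigmaE n : 0 < n -> Defs.sigma n = \sum_(d <- divisors n) d.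
Proof. by move=> n_gt0; rewrite -sumnE -divisors_listE. Qed.

Lemma S_sE n : 0 < n -> S_s n = \sum_(d <- divisors n) s_fun d.
Proof. by move=> n_gt0; rewrite -divisors_listE // -(big_map s_fun xpredT id) -sumnE. Qed.

Lemma proper_divisor_le_s_fun n b : b %| n -> b < n -> b <= s_fun n.
Proof.
move=> dvd_bn lt_bn; have n_gt0 : 0 < n := leq_ltn_trans (leq0n b) lt_bn.
suff : n + b <= Defs.sigma n by rewrite /s_fun; lia.
have sub : \sum_(d <- [:: n; b]) d <= \sum_(d <- divisors n) d.
  apply: (@uniq_sub_le_big _ addn leq leqnn (fun x y => leq_addr y x)) => [|| d].
  - by rewrite /= !inE neq_ltn lt_bn orbT.
  - exact: divisors_uniq.
  - by rewrite !inE => /orP[] /eqP ->; rewrite -dvdn_divisors.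
by rewrite sigmaE // big_cons big_seq1 in sub *.
Qed.

Lemma s_fun_le_S_s n : s_fun n <= S_s n.
Proof.
have [-> // | n_gt0] := posnP n.
rewrite S_sE // (bigD1_seq n) ?divisors_id ?divisors_uniq //=; exact: leq_addr.
Qed.

Lemma nonprime_large_divisor n :
  1 < n -> ~~ prime n -> exists b, [/\ b %| n, b < n & n <= b * b].
Proof.
move=> n_gt1 /primePns[|[p [p_pr le_p2_n dvd_pn]]]; first by rewrite ltnNge n_gt1.
have p_gt1 := prime_gt1 p_pr; have def_n := divnK dvd_pn.
exists (n %/ p); split; first by rewrite -{2}def_n dvdn_mulr.
  by rewrite ltn_Pdiv // ltnW.
set b := n %/ p in def_n *; rewrite -def_n -mulnn leq_pmul2r ?(ltnW p_gt1) // in le_p2_n *.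
by rewrite leq_mul2l le_p2_n orbT.
Qed.

Lemma prime_dvd_central_binomial p N :
  prime p -> N < p <= N + N -> p %| 'C(N + N, N).
Proof.
move=> p_pr /andP[lt_Np le_pNN].
have p_ndvd_fact m : m < p -> ~~ (p %| m`!).
  elim: m => [|m IHm] lt_mp; first by rewrite dvdn1 neq_ltn prime_gt1 ?orbT.
  by rewrite factS Euclid_dvdM // negb_or IHm 1?ltnW // gtnNdvd.
have : p %| 'C(N + N, N) * (N`! * (N + N - N)`!).
  by rewrite bin_fact ?leq_addr // dvdn_fact // prime_gt0.
by rewrite addnK !Euclid_dvdM // (negbTE (p_ndvd_fact _ lt_Np)) !orbF.
Qed.

Lemma prod_uniq_primes_dvdn (s : seq nat) m :
  uniq s -> all prime s -> {in s, forall p, p %| m} -> \prod_(p <- s) p %| m.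
Proof.
elim: s => [|p s IHs] /=; first by rewrite big_nil dvd1n.
move=> /andP[p_notin_s uniq_s] /andP[p_pr s_pr] dvd_sm.
have coprime_p_s : coprime p (\prod_(q <- s) q).
  rewrite prime_coprime // Euclid_dvd_prod // big_has; apply/hasP => -[q s_q /=].
  rewrite dvdn_prime2 //; last exact: (allP s_pr).
  by move/eqP=> eq_pq; rewrite eq_pq s_q in p_notin_s.
rewrite big_cons Gauss_dvd // dvd_sm ?mem_head //= IHs // => q s_q.
by apply: dvd_sm; rewrite inE s_q orbT.
Qed.

Lemma central_binomial_le N : 'C(N + N, N) <= 2 ^ (N + N).
Proof.
have lt_N_NN : N < (N + N).+1 by rewrite ltnS leq_addr.
have := expnDn 1 1 (N + N); rewrite addnn -addnn => ->.
by rewrite (bigD1 (Ordinal lt_N_NN)) //= !exp1n !muln1 leq_addr.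
Qed.

Lemma expn_count_prime_dyadic N : N ^ count prime (iota N.+1 N) <= 2 ^ (N + N).
Proof.
apply: leq_trans (central_binomial_le N).
rewrite -iter_muln_1 -big_const_seq.
apply: (@leq_trans (\prod_(p <- iota N.+1 N | prime p) p)).
  rewrite big_seq_cond [leqRHS]big_seq_cond.
  by apply: leq_prod => p /andP[]; rewrite mem_iota => /andP[/ltnW].
apply: dvdn_leq; first by rewrite bin_gt0 leq_addr.
rewrite -big_filter; apply: prod_uniq_primes_dvdn.
- by rewrite filter_uniq // iota_uniq.
- exact: filter_all.
- move=> p; rewrite mem_filter mem_iota => /andP[p_pr range_p].
  by apply: prime_dvd_central_binomial => //; lia.
Qed.

Definition prime_count N := count prime (iota 1 N).

Lemma prime_count_le N : prime_count N <= N.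
Proof. by rewrite -[leqRHS](size_iota 1) count_size. Qed.

Lemma leq_prime_count m n : m <= n -> prime_count m <= prime_count n.
Proof. by move=> le_mn; rewrite /prime_count -(subnKC le_mn) iotaD count_cat leq_addr. Qed.

Lemma prime_count_double N :
  prime_count (N + N) = prime_count N + count prime (iota N.+1 N).
Proof. by rewrite /prime_count iotaD count_cat add1n. Qed.

Lemma prime_count_pow2 k : k * prime_count (2 ^ k) <= 8 * 2 ^ k.
Proof.
elim: k => [|k IHk] //; have [le_k7 | gt_k7] := leqP k 7.
  by rewrite leq_mul // ?prime_count_le //; lia.
have := expn_count_prime_dyadic (2 ^ k); rewrite -expnM leq_exp2l // mulnC => dyadic.
rewrite expnS mul2n -addnn prime_count_double.
nia.
Qed.

Lemma prime_count_bound k N : 2 ^ k <= N -> k.+1 * prime_count N <= 16 * N.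
Proof.
move=> le_2k_N; have N_gt0 : 0 < N by apply: leq_trans le_2k_N; rewrite expn_gt0.
set j := trunc_log 2 N.
have le_2j_N : 2 ^ j <= N := trunc_logP (isT : 1 < 2) N_gt0.
have lt_N_2j1 : N < 2 ^ j.+1 := trunc_log_ltn N (isT : 1 < 2).
have le_kj : k <= j.
  by rewrite -ltnS -(ltn_exp2l _ _ (isT : 1 < 2)); exact: leq_ltn_trans lt_N_2j1.
have := prime_count_pow2 j.+1; have /leq_prime_count := ltnW lt_N_2j1.
rewrite expnS in lt_N_2j1 *; nia.
Qed.

Lemma count_nonprime_closed_complement (P : pred nat) N :
  (forall n, 1 < n -> ~~ prime n -> P n) ->
  count (predC P) (iota 1 N) <= (prime_count N).+1.
Proof.
move=> P_nonprime; set s := iota 1 N.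
have -> : count (predC P) s = count (predI (predC P) (predU (pred1 1) prime)) s.
  apply: eq_in_count => n; rewrite mem_iota /= => /andP[n_gt0 _].
  case: (boolP (P n)) => //= P'n; apply/esym; apply: contraNT P'n.
  by rewrite negb_or => /andP[n_neq1 /P_nonprime]; apply; lia.
apply: (@leq_trans (count (predU (pred1 1) prime) s)); first by apply: sub_count => n /andP[].
have count1_le : count (pred1 1) s <= 1 by rewrite count_uniq_mem ?iota_uniq ?leq_b1.
have := count_predUI (pred1 1) prime s; rewrite -/(prime_count N); lia.
Qed.

Lemma nonprime_closed_complement_sparse (P : pred nat) k N :
  (forall n, 1 < n -> ~~ prime n -> P n) -> 2 ^ k <= N ->
  k.+1 * count (predC P) (iota 1 N) <= 17 * N.
Proof.
move=> P_nonprime le_2k_N; have lt_k_N := leq_trans (ltn_expl k (isT : 1 < 2)) le_2k_N.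
have /prime_count_bound := le_2k_N; have := count_nonprime_closed_complement N P_nonprime.
nia.
Qed.

Lemma count_uptoE (P : pred nat) N : count_upto P N = count P (iota 1 N).
Proof. by rewrite /count_upto -size_filter. Qed.

Open Scope R_scope.

Lemma density_one_of_sparse_complement (P : pred nat) (C : nat) :
  (forall k N, (2 ^ k <= N)%N -> (k.+1 * count (predC P) (iota 1 N) <= C * N)%N) ->
  has_density_one P.
Proof.
move=> sparse eps eps_gt0; have [k k_large] := INR_archimed eps (INR C) eps_gt0.
exists (2 ^ k)%N => N /leP le_2k_N; rewrite /R_dist count_uptoE.
have N_gt0 : 0 < INR N by apply/lt_0_INR/ltP; apply: leq_trans le_2k_N; rewrite expn_gt0.
set bad := count (predC P) (iota 1 N).
have count_P : INR (count P (iota 1 N)) = INR N - INR bad.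
  by rewrite -[X in _ = INR X - _](size_iota 1 N) -(count_predC P) plus_INR -/bad; ring.
have bad_bound : INR k.+1 * INR bad <= INR C * INR N.
  by rewrite -!mult_INR; apply/le_INR/leP/sparse.
have bad_lt : INR bad < eps * INR N.
  apply: (Rmult_lt_reg_l (INR k.+1)); first exact/lt_0_INR/ltP.
  by rewrite S_INR in bad_bound *; have := pos_INR k; nra.
have bad_frac : INR bad = INR N * (INR bad / INR N) by field; lra.
have -> : INR (count P (iota 1 N)) / INR N - 1 = - (INR bad / INR N).
  by rewrite count_P; field; lra.
rewrite Rabs_Ropp Rabs_pos_eq.
- by apply: (Rmult_lt_reg_l (INR N)) => //; rewrite -bad_frac; lra.
- by apply: (Rmult_le_reg_l (INR N)) => //; rewrite -bad_frac Rmult_0_r; exact: pos_INR.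
Qed.

Lemma sqrt_INR_le n b : (n <= b * b)%N -> sqrt (INR n) <= INR b.
Proof.
move=> /leP le_n_bb; rewrite -(sqrt_square (INR b)); last exact: pos_INR.
by apply: sqrt_le_1_alt; rewrite -mult_INR; exact: le_INR.
Qed.

Lemma sqrt_le_Ss_nonprime n : (1 < n)%N -> ~~ prime n -> sqrt_le_Ss n.
Proof.
move=> n_gt1 /(nonprime_large_divisor n_gt1) [b [dvd_bn lt_bn le_n_bb]].
have /leP le_b_Ss := leq_trans (proper_divisor_le_s_fun dvd_bn lt_bn) (s_fun_le_S_s n).
rewrite /sqrt_le_Ss; case: Rle_dec => // -[].
exact: Rle_trans (sqrt_INR_le le_n_bb) (le_INR _ _ le_b_Ss).
Qed.

Theorem lemma6p10 : has_density_one sqrt_le_Ss.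
Proof.
apply: (@density_one_of_sparse_complement _ 17) => k N.
exact: nonprime_closed_complement_sparse sqrt_le_Ss_nonprime.
Qed.
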